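(* Let $1\le k\le n$ and $N=k(n-k)$. In the field of rational functions $\mathbb Q(x_1,\dots,x_n,m_1,\dots,m_N)$ the following identity holds: $$\sum_{J\subset\{1,\dots,n\},\ |J|=k}\ \frac{\prod_{r=1}^{N}(x_J-m_r)}{\prod_{i\in J}\prod_{j\notin J}(x_i-x_j)} \;=\; N!\cdot\prod_{i=1}^k\frac{(i-1)!}{(n-i)!},$$ where $x_J=\sum_{i\in J}x_i$.
   Context: $x_1,\dots,x_n,m_1,\dots,m_N$ are independent indeterminates. *)

From HB Require Import structures.
From mathcomp Require Import all_boot all_order all_algebra.
Set Implicit Arguments. Unset Strict Implicit. Unset Printing Implicit Defensive.

From HB Require Import structures.
From mathcomp Require Import all_boot all_order all_algebra.
From mathcomp Require Import mpoly zify.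
Import Order.TTheory GRing.Theory Num.Theory.
Set Implicit Arguments. Unset Strict Implicit. Unset Printing Implicit Defensive.

(* Write w(i) = prod_(j <> i) (x_i - x_j) and V(t) = prod_(a <> b) (x_(t a) - x_(t b))
   for t : 'I_k -> 'I_n.  If t is injective with image J, then
   prod_a w(t a) = V(t) * prod_(i in J, j notin J) (x_i - x_j), while V(t) = 0 when t
   is not injective; hence k! times the left-hand side is the sum over all tuples t
   of G(x o t) / prod_a w(t a), where G = prod_r (X_1 + ... + X_k - m_r) * V(X).
   Expanding G into monomials and using the Lagrange identity
   sum_i x_i^d / w(i) = [d = n - 1] for d <= n - 1, this tuple sum is the coefficient
   of (X_1 ... X_k)^(n-1) in G.  Since G has degree N + k(k-1) = k(n-1), that
   coefficient only involves its top homogeneous part (X_1 + ... + X_k)^N * V(X),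
   so the left-hand side depends neither on x nor on m.  Evaluating it at x_i = i and
   m_r = (0 + ... + (k-1)) + r kills every term except J = {n-k, ..., n-1}, whose
   value is the right-hand side. *)

Lemma all_ltn_rem n (s : seq nat) :
  uniq s -> all (fun i => i < n.+1) s -> all (fun i => i < n) (rem n s).
Proof.
move=> us /allP lt_s; apply/allP => i; rewrite mem_rem_uniq // !inE => /andP[ne_in si].
by move: (lt_s i si); rewrite ltnS leq_eqVlt (negPf ne_in).
Qed.

Lemma all_ltn_notin n (s : seq nat) :
  n \notin s -> all (fun i => i < n.+1) s -> all (fun i => i < n) s.
Proof.
move=> ns /allP lt_s; apply/allP => i si; move: (lt_s i si).
by rewrite ltnS leq_eqVlt; case: eqP => // ein; rewrite -ein si in ns.
Qed.

Lemma sumn_uniq_le n (s : seq nat) : uniq s -> all (fun i => i < n) s ->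
  sumn s <= \sum_(a < size s) (n - size s + a).
Proof.
elim: n s => [|n IH] s us lt_s; first by case: s us lt_s.
have [ns | ns] := boolP (n \in s); last first.
  apply: leq_trans (IH _ us (all_ltn_notin ns lt_s)) _.
  by apply: leq_sum => a _; lia.
rewrite (perm_sumn (perm_to_rem ns)) (perm_size (perm_to_rem ns)) /= big_ord_recr /=.
by rewrite addnC leq_add ?IH ?rem_uniq ?all_ltn_rem //; lia.
Qed.

Lemma sumn_uniq_ge n (s : seq nat) : uniq s -> all (fun i => i < n) s ->
  \sum_(a < size s) a <= sumn s.
Proof.
elim: n s => [|n IH] s us lt_s; first by case: s us lt_s => [|? ?]; rewrite ?big_ord0.
have [ns | ns] := boolP (n \in s); last exact: IH us (all_ltn_notin ns lt_s).
have size_le : size s <= n.+1.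
  rewrite -(size_iota 0 n.+1); apply: uniq_leq_size => // i si.
  by rewrite mem_iota; move/allP: lt_s => /(_ i si).
move: size_le; rewrite (perm_sumn (perm_to_rem ns)) (perm_size (perm_to_rem ns)) /=.
by rewrite big_ord_recr /= addnC ltnS => ?; rewrite leq_add ?IH ?rem_uniq ?all_ltn_rem.
Qed.

Definition top_set n k : {set 'I_n} := [set i : 'I_n | n - k <= i].

Section TopSet.
Variables (n k : nat).
Hypothesis le_kn : k <= n.

Lemma big_top_set (R : Type) (idx : R) (op : Monoid.com_law idx) (f : nat -> R) :
  \big[op/idx]_(i in top_set n k) f i = \big[op/idx]_(a < k) f (n - k + a).
Proof.
rewrite (eq_bigl (fun i : 'I_n => predT (i : nat) && (n - k <= i))) => [|i]; last first.
  by rewrite inE.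
rewrite -big_geq_mkord -{1}[n - k]add0n big_addn subKn //.
by rewrite big_mkord; apply: eq_bigr => a _; rewrite addnC.
Qed.

Lemma big_compl_top_set (R : Type) (idx : R) (op : Monoid.com_law idx) (f : nat -> R) :
  \big[op/idx]_(j in ~: top_set n k) f j = \big[op/idx]_(j < n - k) f j.
Proof.
rewrite (big_ord_widen _ _ (leq_subr k n)).
by apply: eq_bigl => j; rewrite !inE ltnNge.
Qed.

Lemma card_top_set : #|top_set n k| = k.
Proof. by rewrite -sum1_card (big_top_set addn (fun=> 1)) sum1_card card_ord. Qed.

Lemma sum_top_set : \sum_(i in top_set n k) i = \sum_(a < k) (n - k + a).
Proof. exact: (big_top_set addn id). Qed.

Lemma subset_sum_bounds (J : {set 'I_n}) : #|J| = k ->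
  \sum_(a < k) a <= \sum_(i in J) i <= \sum_(a < k) (n - k + a).
Proof.
move=> card_J; pose s := [seq val i | i <- enum J].
have us : uniq s by rewrite map_inj_uniq ?enum_uniq //; exact: val_inj.
have lt_s : all (fun i => i < n) s by apply/allP => _ /mapP [i _ ->]; exact: ltn_ord.
have size_s : size s = k by rewrite size_map -cardE.
have <- : sumn s = \sum_(i in J) i by rewrite sumnE big_map big_enum.
by rewrite -size_s (sumn_uniq_ge us lt_s) (sumn_uniq_le us lt_s).
Qed.

Lemma max_subset_sum_top (J : {set 'I_n}) : #|J| = k ->
  \sum_(i in J) i = \sum_(a < k) (n - k + a) -> J = top_set n k.
Proof.
move=> card_J J_max; apply/eqP; rewrite eqEcard card_J card_top_set leqnn andbT.
apply/subsetP => j jJ; rewrite inE leqNgt; apply/negP => j_low.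
have [i i_top iJ] : exists2 i, i \in top_set n k & i \notin J.
  apply/subsetPn; apply: contraTN jJ => /subsetP top_J.
  suff -> : J = top_set n k by rewrite inE -ltnNge.
  by apply/eqP; rewrite eq_sym eqEcard card_top_set card_J leqnn andbT; apply/subsetP.
have iJj : i \notin J :\ j by rewrite !inE negb_and iJ orbT.
have card_swap : #|i |: (J :\ j)| = k.
  by rewrite cardsU1 iJj -card_J (cardsD1 j J) jJ.
have /andP[_] := subset_sum_bounds card_swap.
rewrite -J_max big_setU1 //= (big_setD1 j jJ) /= leq_add2r leqNgt.
by move: i_top; rewrite inE => /(leq_trans j_low) ->.
Qed.

End TopSet.

Lemma prod_ffact_fact n k : k <= n ->
  \prod_(a < k) (n - k + a) ^_ (n - k) * \prod_(a < k) a`! = \prod_(i < k) (n - i.+1)`!.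
Proof.
move=> le_kn; rewrite -big_split (reindex_inj rev_ord_inj) /=.
apply: eq_bigr => i _; rewrite -{2}[(k - i.+1)%N](addKn (n - k)) ffact_fact ?leq_addr //.
by congr (_ `!); have := ltn_ord i; lia.
Qed.

Local Open Scope ring_scope.

Definition lagrange_den (F : fieldType) n (x : 'I_n -> F) (i : 'I_n) : F :=
  \prod_(j | j != i) (x i - x j).

Section Lagrange.
Variables (F : fieldType) (n : nat) (x : 'I_n -> F).
Hypothesis x_inj : injective x.

Lemma lagrange_den_neq0 i : lagrange_den x i != 0.
Proof.
rewrite prodf_seq_neq0; apply/allP => j _; apply/implyP => ji.
by rewrite subr_eq0; apply: contra ji => /eqP/x_inj ->.
Qed.

Lemma lagrange_sum_pow d : (0 < n)%N -> (d <= n.-1)%N ->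
  \sum_i x i ^+ d / lagrange_den x i = (d == n.-1)%:R.
Proof.
move=> n_gt0 le_d.
pose basis i := \prod_(j | j != i) ('X - (x j)%:P).
have size_basis i : size (basis i) = n.
  rewrite /basis -big_filter size_prod_XsubC size_filter -[RHS](prednK n_gt0).
  rewrite -[n in n.-1]card_ord -(cardC1 i) cardE /enum_mem size_filter.
  by congr _.+1; apply: eq_count => j; rewrite !inE.
pose q := \sum_i (x i ^+ d / lagrange_den x i) *: basis i.
have size_q : (size q <= n)%N.
  apply: leq_trans (size_sum _ _ _) _; apply/bigmax_leqP => i _.
  by apply: leq_trans (size_scale_leq _ _) _; rewrite size_basis.
have q_x l : q.[x l] = x l ^+ d.
  rewrite horner_sum (bigD1 l) //= big1 ?addr0 => [|i il].
    rewrite hornerZ horner_prod (eq_bigr _ (fun j _ => hornerXsubC _ _)).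
    by rewrite divfK ?lagrange_den_neq0.
  rewrite hornerZ horner_prod (bigD1 l) 1?eq_sym //=.
  by rewrite hornerXsubC subrr mul0r mulr0.
have q_X : q = 'X^d.
  apply/eqP; rewrite -subr_eq0; apply: contraT => nz.
  have := max_poly_roots nz (rs := map x (enum 'I_n)).
  rewrite size_map size_enum_ord map_inj_uniq ?enum_uniq //.
  have -> : all (root (q - 'X^d)) (map x (enum 'I_n)).
    by apply/allP => _ /mapP [y _ ->]; rewrite rootE hornerD hornerN q_x hornerXn subrr.
  move=> /(_ isT isT); rewrite ltnNge => /negP[].
  apply: leq_trans (size_polyD _ _) _; rewrite geq_max size_q size_polyN size_polyXn.
  by rewrite -(prednK n_gt0) ltnS.
have := congr1 (fun p : {poly F} => p`_n.-1) q_X.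
rewrite coefXn coef_sum eq_sym => <-; apply: eq_bigr => i _.
have /monicP := monic_prod_XsubC (index_enum 'I_n) (fun j => j != i) x.
by rewrite coefZ lead_coefE size_basis => ->; rewrite mulr1.
Qed.
End Lagrange.

Section LagrangeTuples.
Variables (F : fieldType) (n k : nat) (x : 'I_n -> F).
Hypotheses (x_inj : injective x) (n_gt0 : (0 < n)%N).

Lemma prod_lagrange_sum (mm : 'X_{1..k}) : (mdeg mm <= k * n.-1)%N ->
  \prod_a (\sum_i x i ^+ mm a / lagrange_den x i)
    = (mm == [multinom n.-1 | _ < k])%:R.
Proof.
move=> deg_mm; have [/existsP[a lt_a] | /existsPn ge_mm] := boolP [exists a, mm a < n.-1]%N.
  rewrite (bigD1 a) //= lagrange_sum_pow ?(ltnW lt_a) ?ltn_eqF // mul0r.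
  by case: eqP lt_a => // ->; rewrite mnmE ltnn.
have ge_mm' b : (n.-1 <= mm b)%N by rewrite leqNgt ge_mm.
have := leqif_sum (fun b (_ : true) => leqif_eq (ge_mm' b)).
rewrite sum_nat_const card_ord -mdegE => /geq_leqif.
rewrite deg_mm => /esym/forall_inP eq_mm; have -> : mm = [multinom n.-1 | _ < k].
  by apply/mnmP => b; rewrite mnmE; apply/esym/eqP/eq_mm.
by rewrite eqxx big1 // => a _; rewrite mnmE lagrange_sum_pow // eqxx.
Qed.

Lemma sum_tuples_meval (G : {mpoly F[k]}) :
  {in msupp G, forall mm, mdeg mm <= k * n.-1}%N ->
  \sum_(t : {ffun 'I_k -> 'I_n}) G.@[fun a => x (t a)] / \prod_a lagrange_den x (t a)
    = G@_[multinom n.-1 | _ < k].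
Proof.
move=> deg_G; under eq_bigr do rewrite mevalE mulr_suml.
have -> : G@_[multinom n.-1 | _ < k]
    = \sum_(mm <- msupp G) G@_mm * (mm == [multinom n.-1 | _ < k])%:R.
  by rewrite {1}(mpolyE G) raddf_sum /=; apply: eq_bigr => mm _; rewrite mcoeffZ mcoeffX.
rewrite exchange_big /= !big_seq; apply: eq_bigr => mm supp_mm.
rewrite -prod_lagrange_sum ?deg_G // bigA_distr_bigA mulr_sumr.
by apply: eq_bigr => t _; rewrite -mulrA -prodf_div.
Qed.

End LagrangeTuples.

Lemma size_prod_ord_XsubC (R : comNzRingType) N (c : 'I_N -> R) :
  size (\prod_(r < N) ('X - (c r)%:P)) = N.+1.
Proof. by rewrite size_prod_XsubC /index_enum unlock -enumT size_enum_ord. Qed.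

Lemma dhomog_big_prod (R : comNzRingType) k (I : Type) (r : seq I) (P : pred I)
    (p : I -> {mpoly R[k]}) (d : I -> nat) :
  (forall i, P i -> p i \is (d i).-homog) ->
  \prod_(i <- r | P i) p i \is (\sum_(i <- r | P i) d i)%N.-homog.
Proof.
move=> homog_p; elim: r => [|i r IH]; first by rewrite !big_nil dhomog1.
by rewrite !big_cons; case: ifP => // Pi; apply: dhomogM (homog_p _ Pi) IH.
Qed.

Section NumerPoly.
Variables (R : comNzRingType) (k : nat).

Definition msum_vars : {mpoly R[k]} := \sum_(a < k) 'X_a.

Definition mvdm_pairs : {mpoly R[k]} :=
  \prod_(a < k) \prod_(b < k | b != a) ('X_a - 'X_b).

Definition numer_poly N (c : 'I_N -> R) : {mpoly R[k]} :=
  \prod_(r < N) (msum_vars - (c r)%:MP) * mvdm_pairs.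

Lemma msum_vars_homog : msum_vars \is 1.-homog.
Proof. by apply: rpred_sum => a _; rewrite dhomogX; apply/eqP/mdeg1. Qed.

Lemma mvdm_pairs_homog : mvdm_pairs \is (k * k.-1)%N.-homog.
Proof.
have -> : (k * k.-1 = \sum_(a < k) \sum_(b < k | b != a) 1)%N.
  rewrite -[X in (X * _)%N]card_ord -sum_nat_const; apply: eq_bigr => a _.
  by rewrite sum1_card cardC1 card_ord.
apply: dhomog_big_prod => a _; apply: dhomog_big_prod => b _.
by apply: rpredB; rewrite dhomogX; apply/eqP/mdeg1.
Qed.

Lemma msum_vars_mvdm_homog i :
  msum_vars ^+ i * mvdm_pairs \is (i + k * k.-1)%N.-homog.
Proof.
by apply: dhomogM mvdm_pairs_homog; rewrite -[X in X.-homog]mul1n dhomogMn ?msum_vars_homog.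
Qed.

Variables (N : nat) (c : 'I_N -> R).

Lemma mcoeff_numer_poly mm : (numer_poly c)@_mm
  = \sum_(i < N.+1) (\prod_(r < N) ('X - (c r)%:P))`_i * (msum_vars ^+ i * mvdm_pairs)@_mm.
Proof.
rewrite /numer_poly; set P := \prod_(r < N) ('X - _).
have -> : \prod_(r < N) (msum_vars - (c r)%:MP) = (map_poly (@mpolyC k R) P).[msum_vars].
  rewrite /P rmorph_prod horner_prod; apply: eq_bigr => r _.
  by rewrite /= map_polyXsubC hornerXsubC.
have mpolyC_inj : injective (@mpolyC k R) by move=> a b /eqP; rewrite mpolyC_eq => /eqP.
rewrite (@horner_coef_wide _ N.+1); last first.
  by rewrite size_map_inj_poly ?raddf0 ?size_prod_ord_XsubC.
rewrite mulr_suml raddf_sum /=; apply: eq_bigr => i _.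
by rewrite coef_map /= -mulrA mcoeffCM.
Qed.

Lemma mcoeff_numer_poly_gt mm : (N + k * k.-1 < mdeg mm)%N -> (numer_poly c)@_mm = 0.
Proof.
move=> deg_mm; rewrite mcoeff_numer_poly big1 // => i _.
rewrite (dhomog_nemf_coeff (msum_vars_mvdm_homog i)) ?mulr0 // neq_ltn.
by rewrite (leq_ltn_trans _ deg_mm) ?orbT // leq_add2r -ltnS.
Qed.

Lemma mcoeff_numer_poly_top mm : mdeg mm = (N + k * k.-1)%N ->
  (numer_poly c)@_mm = (msum_vars ^+ N * mvdm_pairs)@_mm.
Proof.
move=> deg_mm; rewrite mcoeff_numer_poly big_ord_recr /= big1 ?add0r => [|i _].
  have := lead_coef_prod_XsubC (index_enum 'I_N) predT c.
  by rewrite lead_coefE size_prod_ord_XsubC => ->; rewrite mul1r.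
rewrite (dhomog_nemf_coeff (msum_vars_mvdm_homog i)) ?mulr0 //.
by change (mdeg mm != (i + k * k.-1)%N); rewrite deg_mm eqn_add2r gtn_eqF.
Qed.

End NumerPoly.

Lemma meval_numer_poly (F : fieldType) n k N (x : 'I_n -> F) (c : 'I_N -> F)
    (t : 'I_k -> 'I_n) :
  (numer_poly k c).@[fun a => x (t a)]
    = \prod_(r < N) (\sum_a x (t a) - c r) * \prod_a \prod_(b | b != a) (x (t a) - x (t b)).
Proof.
rewrite mevalM !rmorph_prod; congr (_ * _); apply: eq_bigr => r _.
  rewrite rmorphB /= mevalC rmorph_sum; congr (_ - _).
  by apply: eq_bigr => a _; apply: mevalXU.
by rewrite rmorph_prod; apply: eq_bigr => b _; rewrite rmorphB /= !mevalXU.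
Qed.

Section Localization.
Variables (F : fieldType) (n N : nat) (x : 'I_n -> F) (c : 'I_N -> F).

Definition loc_term (J : {set 'I_n}) : F :=
  (\prod_(r < N) ((\sum_(i in J) x i) - c r))
    / (\prod_(i in J) \prod_(j in ~: J) (x i - x j)).

Definition loc_sum k : F := \sum_(J : {set 'I_n} | #|J| == k) loc_term J.

Definition tuple_term k (t : 'I_k -> 'I_n) : F :=
  \prod_(r < N) (\sum_a x (t a) - c r) * \prod_a \prod_(b | b != a) (x (t a) - x (t b))
    / \prod_a lagrange_den x (t a).

Hypothesis x_inj : injective x.

Section InjectiveTuple.
Variables (k : nat) (t : 'I_k -> 'I_n).
Hypothesis t_inj : injective t.
Let J := [set t a | a in [set: 'I_k]].

Lemma big_image_tuple (R : Type) (idx : R) (op : Monoid.com_law idx) (f : 'I_n -> R) :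
  \big[op/idx]_(i in J) f i = \big[op/idx]_a f (t a).
Proof.
rewrite big_imset /= => [|a b _ _ /t_inj //].
by apply: eq_bigl => a; rewrite inE.
Qed.

Lemma prod_lagrange_den_tuple :
  \prod_a lagrange_den x (t a)
    = \prod_a \prod_(b | b != a) (x (t a) - x (t b))
      * \prod_(i in J) \prod_(j in ~: J) (x i - x j).
Proof.
rewrite big_image_tuple -big_split; apply: eq_bigr => a _.
rewrite /lagrange_den (bigID (mem J)) /=; congr (_ * _).
  rewrite (eq_bigl (fun j => (j \in J) && (j != t a))) => [|j]; last by rewrite andbC.
  rewrite big_imset_cond; last by apply: in2W.
  by apply: eq_bigl => b; rewrite inE (inj_eq t_inj).
apply: eq_bigl => j; rewrite inE andb_idl // => jJ.
by apply: contraNneq jJ => ->; apply: imset_f.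
Qed.

Lemma tuple_term_image : tuple_term t = loc_term J.
Proof.
rewrite /tuple_term /loc_term prod_lagrange_den_tuple.
set D := \prod_(i in J) _; under [in RHS]eq_bigr do rewrite big_image_tuple.
have vdm_neq0 : \prod_a \prod_(b | b != a) (x (t a) - x (t b)) != 0.
  rewrite prodf_seq_neq0; apply/allP => a _; apply/implyP => _.
  rewrite prodf_seq_neq0; apply/allP => b _; apply/implyP => ba.
  by rewrite subr_eq0; apply: contra ba => /eqP/x_inj/t_inj ->.
by rewrite invfM mulrA mulfK.
Qed.

End InjectiveTuple.

Lemma sum_tuple_term k :
  \sum_(t : {ffun 'I_k -> 'I_n}) tuple_term t = k`!%:R * loc_sum k.
Proof.
rewrite (bigID (fun t : {ffun _} => injectiveb t)) /= [X in _ + X]big1 ?addr0; last first.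
  move=> t /injectivePn [a [b ab tab]].
  rewrite /tuple_term; have -> : \prod_a \prod_(b | b != a) (x (t a) - x (t b)) = 0.
    by rewrite (bigD1 a) //= (bigD1 b) 1?eq_sym //= tab subrr !mul0r.
  by rewrite mulr0 mul0r.
rewrite (partition_big (fun t : {ffun 'I_k -> 'I_n} => [set t a | a in [set: 'I_k]])
  (fun J : {set 'I_n} => #|J| == k)) /=; last first.
  by move=> t /injectiveP t_inj; rewrite card_imset // cardsT card_ord.
rewrite mulr_sumr; apply: eq_bigr => J /eqP card_J.
rewrite (eq_bigr (fun=> loc_term J)) => [|t /andP[/injectiveP t_inj /eqP <-]]; last first.
  exact: tuple_term_image.
pose S := [set t : {ffun 'I_k -> 'I_n} in ffun_on (mem J) | injectiveb t].
rewrite (eq_bigl (mem S)) => [|t]; last first.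
  rewrite !inE; apply/andP/andP.
    case=> /injectiveP t_inj /eqP <-.
    by split; [apply/ffun_onP => a; apply: imset_f | apply/injectiveP].
  case=> /ffun_onP t_J /injectiveP t_inj; split; first exact/injectiveP.
  rewrite eqEcard card_imset // cardsT card_ord card_J leqnn andbT.
  by apply/subsetP => _ /imsetP [a _ ->].
by rewrite sumr_const card_inj_ffuns_on card_ord -card_J ffactnn mulr_natl.
Qed.

End Localization.

Lemma loc_sum_top_coef (F : fieldType) (charF : [pchar F] =i pred0) n k
    (x : 'I_n -> F) (c : 'I_(k * (n - k)) -> F) :
  (0 < k)%N -> (k <= n)%N -> injective x ->
  loc_sum x c k
    = (msum_vars F k ^+ (k * (n - k)) * mvdm_pairs F k)@_[multinom n.-1 | _ < k] / k`!%:R.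
Proof.
move=> k_gt0 le_kn x_inj.
have fact_neq0 : k`!%:R != 0 :> F by rewrite (pcharf0P F).1 // -lt0n fact_gt0.
have n_gt0 : (0 < n)%N by apply: leq_trans le_kn.
have deg_numer : (k * (n - k) + k * k.-1 = k * n.-1)%N.
  by rewrite -mulnDr; congr (_ * _)%N; lia.
apply: (canRL (mulfK fact_neq0)); rewrite mulrC -sum_tuple_term //.
under eq_bigr do rewrite /tuple_term -meval_numer_poly.
rewrite sum_tuples_meval // => [|mm]; last first.
  rewrite mcoeff_msupp -deg_numer leqNgt; apply: contra => /mcoeff_numer_poly_gt ->.
  by rewrite eqxx.
apply: mcoeff_numer_poly_top; rewrite mdegE deg_numer.
by under eq_bigr do rewrite mnmE; rewrite sum_nat_const card_ord.
Qed.

Section NaturalNodes.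
Variables (F : fieldType) (n k : nat).
Hypothesis le_kn : (k <= n)%N.

Let N := (k * (n - k))%N.
Let b := (\sum_(a < k) a)%N.
Let nat_nodes (i : 'I_n) : F := (i : nat)%:R.
Let nat_shifts (r : 'I_N) : F := (b + r)%:R.

Lemma sum_top_set_shift : (\sum_(a < k) (n - k + a) = b + N)%N.
Proof. by rewrite big_split /= sum_nat_const card_ord addnC. Qed.

Lemma loc_term_nat_eq0 (J : {set 'I_n}) :
  #|J| = k -> J != top_set n k -> loc_term nat_nodes nat_shifts J = 0.
Proof.
move=> card_J J_top; have /andP[lo hi] := subset_sum_bounds card_J.
have sum_ne : (\sum_(i in J) i != b + N)%N.
  apply: contra J_top => /eqP sum_J; apply/eqP/max_subset_sum_top => //.
  by rewrite sum_J sum_top_set_shift.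
have lt_r : (\sum_(i in J) i - b < N)%N.
  move: lo hi sum_ne; rewrite sum_top_set_shift; lia.
rewrite /loc_term (bigD1 (Ordinal lt_r)) //= /nat_shifts -natr_sum subnKC //.
by rewrite subrr !mul0r.
Qed.

Lemma loc_term_nat_top : loc_term nat_nodes nat_shifts (top_set n k)
  = N`!%:R / (\prod_(a < k) (n - k + a) ^_ (n - k))%:R.
Proof.
rewrite /loc_term /nat_nodes; congr (_ / _).
  rewrite -ffactnn ffact_prod natr_prod; apply: eq_bigr => r _.
  rewrite -natr_sum sum_top_set // sum_top_set_shift /nat_shifts.
  by rewrite -natrB ?leq_add2l ?(ltnW (ltn_ord r)) // subnDl.
rewrite (big_top_set le_kn _
  (fun i => \prod_(j in ~: top_set n k) (i%:R - (j : nat)%:R : F))).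
rewrite natr_prod; apply: eq_bigr => a _.
rewrite (big_compl_top_set n k _ (fun j => (n - k + a)%:R - j%:R : F)) ffact_prod natr_prod.
by apply: eq_bigr => j _; rewrite natrB // (leq_trans (ltnW (ltn_ord j))) ?leq_addr.
Qed.

End NaturalNodes.

Lemma loc_sum_nat (F : fieldType) (charF : [pchar F] =i pred0) n k : (k <= n)%N ->
  loc_sum (fun i : 'I_n => (i : nat)%:R : F)
      (fun r : 'I_(k * (n - k)) => ((\sum_(a < k) a)%N + r)%:R) k
    = ((k * (n - k))`!)%:R * \prod_(i < k) ((i`!)%:R / ((n - i.+1)`!)%:R).
Proof.
move=> le_kn; rewrite /loc_sum (bigD1 (top_set n k)) ?card_top_set //=.
rewrite [X in _ + X]big1 ?addr0 => [|J /andP[/eqP card_J J_top]]; last first.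
  exact: loc_term_nat_eq0.
rewrite loc_term_nat_top // prodf_div -!natr_prod -(prod_ffact_fact le_kn) natrM.
have fact_neq0 : (\prod_(a < k) a`!)%:R != 0 :> F.
  by rewrite (pcharf0P F).1 // -lt0n prodn_gt0 // => a; apply: fact_gt0.
by rewrite invfM; congr (_ * _); rewrite mulrCA mulfV ?mulr1.
Qed.

Lemma natr_inj_pchar0 (F : fieldType) :
  [pchar F] =i pred0 -> injective (fun m : nat => m%:R : F).
Proof.
move=> /pcharf0P F0 m p; wlog le_mp : m p / (m <= p)%N => [hw eq_mp|].
  by case: (leqP m p) => [/hw -> //|/ltnW /hw ->].
move=> /eqP; rewrite eq_sym -subr_eq0 -natrB // F0 subn_eq0 => le_pm.
by apply/eqP; rewrite eqn_leq le_mp.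
Qed.

Theorem mainTheorem14 (F : fieldType) (charF : [pchar F] =i pred0)
  (n k : nat) (hk1 : (1 <= k)%N) (hkn : (k <= n)%N)
  (x : 'I_n -> F) (hx : injective x) (m : 'I_(k * (n - k)) -> F) :
  \sum_(J : {set 'I_n} | #|J| == k)
     (\prod_(r < k * (n - k)) ((\sum_(i in J) x i) - m r))
       / (\prod_(i in J) \prod_(j in ~: J) (x i - x j))
  = ((k * (n - k))`!)%:R
    * \prod_(i < k) ((i`!)%:R / ((n - i.+1)`!)%:R).
Proof.
have nat_inj : injective (fun i : 'I_n => (i : nat)%:R : F).
  by move=> i j /(natr_inj_pchar0 charF) /val_inj.
rewrite -/(loc_sum x m k) -(loc_sum_nat charF hkn).
by rewrite !(loc_sum_top_coef charF).
Qed.
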